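(* Let $b_1,\dots,b_m$ be background frames and $f$ a foreground frame, with a distance $d$ satisfying the triangle inequality and $d(b_j,b_{j+1})\le\delta$ for all $1\le j<m$. Suppose $b_i$ is a strong match for $f$, with $d(f,b_i)$ uniformly distributed on $[0,\Psi]$, and let $\gamma\ge0$ be an integer with $1\le i-\gamma$ and $i+\gamma\le m$. Then the expected number of strong matches for $f$ among $b_{i-\gamma},\dots,b_{i+\gamma}$ is at least $2(\gamma+1)\left(1-\frac{\delta\gamma}{2\Psi}\right)-1$.
   Context: A background frame $b$ is a strong match for a foreground frame $f$ if $d(f,b)\le\Psi$, where $\Psi>0$ is a fixed threshold. Randomized model: given that $\{f,b\}$ is a strong match, the distance $d(f,b)$ is modeled as a sample from the uniform distribution on $[0,\Psi]$. *)

From HB Require Import structures.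
From mathcomp Require Import all_boot all_order all_algebra.
From mathcomp Require Import all_classical all_reals all_analysis.

From HB Require Import structures.
From mathcomp Require Import all_boot all_order all_algebra.
From mathcomp Require Import all_classical all_reals all_analysis.
From mathcomp Require Import measurable_realfun lebesgue_integral.
From mathcomp Require Import ring lra zify.
Set Implicit Arguments.
Unset Strict Implicit.
Unset Printing Implicit Defensive.

Import Order.TTheory GRing.Theory Num.Theory.
Local Open Scope classical_set_scope.
Local Open Scope ring_scope.

(* The frame b_j is a strong match as soon as d(f, b_i) <= Psi - |j - i| delta,
   because the triangle inequality along b_i, ..., b_j gives
   d(f, b_j) <= d(f, b_i) + |j - i| delta.  Under the uniform law this event has
   probability at least 1 - |j - i| delta / Psi, and by linearity of expectation
   the expected number of strong matches is at least the sum of these bounds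
   over the window, which is the announced quantity since the distances
   |j - i| add up to gamma (gamma + 1). *)

Lemma sum_distn_window (i g : nat) : (g <= i)%N ->
  (\sum_(i - g <= j < (i + g).+1) `|j - i|)%N = (g * g.+1)%N.
Proof.
elim: g => [|g IH] lt_gi.
  by rewrite subn0 addn0 big_nat1 distnn.
rewrite big_ltn; last by lia.
have -> : (i - g.+1).+1 = (i - g)%N by lia.
rewrite addnS big_nat_recr /=; last by lia.
rewrite IH; last exact: ltnW.
rewrite distnEr; last by lia.
rewrite distnEl; last by lia.
have -> : (i - (i - g.+1) = g.+1)%N by lia.
have -> : ((i + g).+1 - i = g.+1)%N by lia.
nia.
Qed.

Lemma sum_window_affine (R : pzRingType) (i g : nat) (c : R) : (g <= i)%N ->
  \sum_(i - g <= j < (i + g).+1) (1 - `|j - i|%N%:R * c)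
  = (g.*2.+1)%:R - (g * g.+1)%:R * c.
Proof.
move=> lt_gi; rewrite sumrB -mulr_suml -natr_sum sum_distn_window //.
by rewrite sumr_const_nat; congr (_%:R - _); lia.
Qed.

Lemma uniform_prob_Iic_ge (R : realType) (a b t : R) (ab : a < b) : t <= b ->
  (((t - a) / (b - a))%:E <= uniform_prob ab `]-oo, t])%E.
Proof.
move=> le_tb; have [lt_ta|le_at] := ltP t a.
  apply: le_trans (measure_ge0 _ _); rewrite lee_fin pmulr_lle0 ?subr_le0 ?ltW //.
  by rewrite invr_gt0 subr_gt0.
apply: (@le_trans _ _ (uniform_prob ab `[a, t])); last first.
  apply: le_measure; rewrite ?inE //.
  by move=> x /=; rewrite !in_itv /= => /andP[].
rewrite /uniform_prob (eq_integral (fun=> ((b - a)^-1)%:E)); last first.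
  move=> x; rewrite inE /= in_itv /= => /andP[le_ax le_xt].
  by rewrite /uniform_pdf le_ax (le_trans le_xt le_tb).
rewrite integral_cst //= lebesgue_measure_itv /= lte_fin.
case: ltP => [lt_at|le_ta]; first by rewrite -EFinD -EFinM mulrC.
have -> : t = a by apply/le_anti/andP.
by rewrite subrr mul0r mule0.
Qed.

Lemma integral_sum_indic (d : measure_display) (T : measurableType d)
    (R : realType) (mu : {measure set T -> \bar R}) (I : Type) (s : seq I)
    (A : I -> set T) : (forall j, measurable (A j)) ->
  (\int[mu]_w (\sum_(j <- s) \1_(A j) w)%:E = \sum_(j <- s) mu (A j))%E.
Proof.
move=> mA; under eq_integral do rewrite -sumEFin.
rewrite ge0_integral_sum //; last first.
  by move=> j; apply/measurable_EFinP; exact: measurable_indic.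
by apply: eq_bigr => j _; rewrite integral_indic // setIT.
Qed.

Lemma indic_preimage_Iic (T : Type) (R : realDomainType) (g : T -> R) r x :
  \1_(g @^-1` `]-oo, r]) x = ((g x <= r)%R)%:R :> R.
Proof.
rewrite indicE; congr ((nat_of_bool _)%:R).
by apply/idP/idP; rewrite inE /preimage /= in_itv.
Qed.

Section DistanceAlongChain.
Variables (R : realDomainType) (T : Type) (dist : T -> T -> R).
Hypothesis dist_sym : forall x y, dist x y = dist y x.
Hypothesis dist_triangle : forall x y z, dist x z <= dist x y + dist y z.

Lemma dist_ge0 x y : 0 <= dist x y.
Proof.
have := dist_triangle x y x; have := dist_triangle x x x.
rewrite (dist_sym y x); lra.
Qed.

Variables (b : nat -> T) (m : nat) (delta : R).
Hypothesis dist_step : forall j, (1 <= j < m)%N -> dist (b j) (b j.+1) <= delta.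

Lemma dist_chain_le p n : (1 <= p)%N -> (p + n.+1 <= m)%N ->
  dist (b p) (b (p + n.+1)) <= n.+1%:R * delta.
Proof.
elim: n => [|n IH] p_ge1 le_pm.
  by rewrite addn1 mul1r dist_step //; lia.
apply: le_trans (dist_triangle _ (b (p + n.+1)) _) _.
rewrite [(p + n.+2)%N]addnS [n.+2%:R]mulrSr mulrDl mul1r.
by rewrite lerD ?IH ?dist_step //; lia.
Qed.

Lemma dist_window_le p q : (1 <= p <= m)%N -> (1 <= q <= m)%N -> p != q ->
  dist (b p) (b q) <= `|q - p|%N%:R * delta.
Proof.
wlog lt_pq : p q / (p < q)%N => [hwlog rp rq ne|rp rq _].
  case: (ltngtP p q) => [lt_pq|lt_qp|eq_pq]; first exact: hwlog.
    by rewrite dist_sym distnC hwlog // eq_sym.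
  by rewrite eq_pq eqxx in ne.
have := @dist_chain_le p (q - p).-1.
have -> : (p + (q - p).-1.+1)%N = q by lia.
have -> : (q - p).-1.+1 = `|q - p|%N by rewrite distnEl; lia.
by apply; lia.
Qed.

Lemma distn_step_ge0 p q : (1 <= p <= m)%N -> (1 <= q <= m)%N ->
  0 <= `|q - p|%N%:R * delta.
Proof.
move=> rp rq; have [->|ne_pq] := eqVneq p q; first by rewrite distnn mul0r.
exact: le_trans (dist_ge0 _ _) (dist_window_le rp rq ne_pq).
Qed.

Lemma dist_le_shift x p q r : (1 <= p <= m)%N -> (1 <= q <= m)%N ->
  dist x (b p) <= r - `|q - p|%N%:R * delta -> dist x (b q) <= r.
Proof.
move=> rp rq; have [->|ne_pq] := eqVneq p q; first by rewrite distnn mul0r subr0.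
have := dist_triangle x (b p) (b q); have := dist_window_le rp rq ne_pq; lra.
Qed.

End DistanceAlongChain.

Theorem lemma3p5 (R : realType) (d0 : measure_display) (Omega : measurableType d0)
  (P : probability Omega R) (Frame : Type)
  (dist : Omega -> Frame -> Frame -> R) (f : Frame) (b : nat -> Frame)
  (m i gamma : nat) (delta Psi : R) (hPsi : 0 < Psi)
  (dsym : forall w x y, dist w x y = dist w y x)
  (dtri : forall w x y z, dist w x z <= dist w x y + dist w y z)
  (hdelta : forall w j, (1 <= j < m)%N -> dist w (b j) (b j.+1) <= delta)
  (hmeas : forall j, measurable_fun setT (fun w => dist w f (b j)))
  (hunif : forall A : set R, measurable A ->
     P ((fun w => dist w f (b i)) @^-1` A) = uniform_prob hPsi A)
  (hlo : (1 <= i - gamma)%N) (hhi : (i + gamma <= m)%N) :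
  ((2 * (gamma + 1)%:R * (1 - delta * gamma%:R / (2 * Psi)) - 1)%:E
   <= \int[P]_w (\sum_(i - gamma <= j < (i + gamma).+1)
                   (((dist w f (b j) <= Psi)%R)%:R : R))%:E)%E.
Proof.
pose B j := (fun w => dist w f (b j)) @^-1` `]-oo, Psi].
pose A (j : nat) :=
  (fun w => dist w f (b i)) @^-1` `]-oo, Psi - `|j - i|%N%:R * delta].
have mpre j (I : interval R) :
    measurable ((fun w => dist w f (b j)) @^-1` [set` I]).
  by have := hmeas j measurableT _ (measurable_itv I); rewrite setTI.
have i_range : (1 <= i <= m)%N by lia.
have in_range j : (i - gamma <= j < (i + gamma).+1)%N -> (1 <= j <= m)%N.
  by lia.
have A_sub_B j : (i - gamma <= j < (i + gamma).+1)%N -> A j `<=` B j.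
  move=> jw w; rewrite /A /B /= !in_itv /=.
  exact: (dist_le_shift (dsym w) (dtri w) (hdelta w) i_range (in_range j jw)).
have P_A_ge j : (i - gamma <= j < (i + gamma).+1)%N ->
    ((1 - `|j - i|%N%:R * (delta / Psi))%:E <= P (A j))%E.
  move=> jw; rewrite /A hunif //.
  have := uniform_prob_Iic_ge hPsi (t := Psi - `|j - i|%N%:R * delta).
  rewrite !subr0 mulrBl divff ?gt_eqF // mulrA; apply.
  have := distn_step_ge0 (dsym point) (dtri point) (hdelta point) i_range (in_range j jw).
  lra.
have -> : (fun w => (\sum_(i - gamma <= j < (i + gamma).+1)
    ((dist w f (b j) <= Psi)%R)%:R : R)%:E) =
    (fun w => (\sum_(i - gamma <= j < (i + gamma).+1) \1_(B j) w)%:E).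
  by apply/funext => w; congr EFin; apply: eq_bigr => j _; rewrite indic_preimage_Iic.
rewrite integral_sum_indic => [|j]; last exact: mpre.
have -> : 2 * (gamma + 1)%:R * (1 - delta * gamma%:R / (2 * Psi)) - 1 =
    \sum_(i - gamma <= j < (i + gamma).+1) (1 - `|j - i|%N%:R * (delta / Psi)).
  rewrite sum_window_affine; last by lia.
  rewrite -mul2n -[(2 * gamma).+1]addn1 -[gamma.+1]addn1 !natrD !natrM.
  by field; rewrite gt_eqF.
rewrite -sumEFin !big_nat; apply: lee_sum => j jw.
apply: le_trans (P_A_ge j jw) (le_measure _ _ _ (A_sub_B j jw)); rewrite inE.
- exact: mpre.
- exact: mpre.
Qed.
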